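(* Let $\mathcal H^1_{\mathrm{TT}}=(C,F^1,D,G)$ satisfy the Hybrid Basic Conditions, let $(\Phi,\{H_k\}_{k=1}^\infty)$ with $\Phi=(\phi_s,\phi_f)$ and $H_k=(h_{s,k},h_{f,k})$ be a two-timescale asymptotic simulation of $\mathcal H^1_{\mathrm{TT}}$, and let $\Lambda:\mathbb R^{n_s}\rightrightarrows\mathbb R^{n_f}$ have compact graph with $\omega(\Phi)\subset\mathrm{gph}(\Lambda)$. Then $(\phi_s,\{h_{s,k}\}_{k=1}^\infty)$ is an asymptotic simulation of the reduced system $\mathcal H^\Lambda_{\mathrm R}$.
   Context: Hybrid inclusions. A hybrid inclusion $\mathcal H=(C,F,D,G)$ on $\mathbb R^n$ consists of sets $C,D\subset\mathbb R^n$ and set-valued maps $F,G:\mathbb R^n\rightrightarrows\mathbb R^n$ ($x\in C,\ \dot x\in F(x)$; $x\in D,\ x^+\in G(x)$). It satisfies the Hybrid Basic Conditions if $C,D$ are closed; $F,G$ are outer semicontinuous and locally bounded; $F(x)$ is nonempty and convex for every $x\in C$; $G(x)$ is nonempty for every $x\in D$. $F_C(x):=F(x)$ for $x\in C$, $\emptyset$ otherwise; $G_D$ analogously. Hybrid sequences. A compact hybrid sequence domain is $\bigcup_{j=0}^{J-1}(\{k_j,\dots,k_{j+1}\}\times\{j\})$ with $J\in\mathbb N$, integers $0=k_0\le\dots\le k_J$; a hybrid sequence domain is a union of a nondecreasing sequence of such sets; a hybrid sequence is a map on a hybrid sequence domain; complete = unbounded domain; complete in the $k$- (resp. $j$-)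 direction = set of $k$'s (resp. $j$'s) in the domain unbounded. $\bar\jmath_k:=\inf\{j:(k+1,j)\in\mathrm{dom}\,\phi\}$, $\bar k_j:=\inf\{k:(k,j+1)\in\mathrm{dom}\,\phi\}$. $\limsup$ of a sequence = set of its accumulation points. $\omega(\phi)$ = set of all $\lim_i\phi(k_i,j_i)$ with $(k_i,j_i)\in\mathrm{dom}\,\phi$, $k_i+j_i\to\infty$. Asymptotic simulations. $\{h_k\}$ is admissible if $h_k>0$, $h_k\to0$, $\sum h_k=\infty$; $\tau_k:=\sum_{i=0}^{k-1}h_{i+1}$, $m(t):=\max\{k:\tau_k\le t\}$. $(\phi,\{h_k\})$ is an asymptotic simulation of $\mathcal H$ if $\phi$ is a bounded complete hybrid sequence, $\{h_k\}$ is admissible, and: (1) if $\phi$ is complete in the $k$-direction, there is a bounded sequence $\{f_k\}_{k\ge0}$ with $\limsup_{k}(\phi(k,\bar\jmath_k),f_k)\subset\mathrm{gph}(F_C)$ and, with $\hat f_{k+1}:=(\phi(k+1,\bar\jmath_k)-\phi(k,\bar\jmath_k))/h_{k+1}$, for each $T>0$, $\lim_{n\to\infty}\sup_{n+1\le k\le m(\tau_n+T)}|\sum_{i=n}^{k-1}h_{i+1}(\hat f_{i+1}-f_i)|=0$; (2) if $\phi$ is complete in the $j$-direction, $\limsup_{j}(\phi(\bar k_j,j),\phi(\bar k_j,j+1))\subset\mathrm{gph}(G_D)$. Two-timescale setting. $n=n_s+n_f$, $x=(x_s,x_f)$. $\mathcal H^1_{\mathrm{TT}}=(C,F^1,D,G)$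 with $C,D\subset\mathbb R^n$, $F_s:\mathbb R^n\rightrightarrows\mathbb R^{n_s}$, $F_f:\mathbb R^n\rightrightarrows\mathbb R^{n_f}$, $F^1(x):=F_s(x)\times F_f(x)$, $G:\mathbb R^n\rightrightarrows\mathbb R^n$. $\{H_k\}$, $H_k=(h_{s,k},h_{f,k})\in\mathbb R^2_{>0}$, is two-timescale admissible if both component sequences are admissible and $h_{s,k}/h_{f,k}\to0$. For $r\in\{s,f\}$: $\tau_{r,k}:=\sum_{i=0}^{k-1}h_{r,i+1}$, $m_r(t):=\max\{k:\tau_{r,k}\le t\}$, $\mathcal I_{r,n,T}:=\{k:n+1\le k\le m_r(\tau_{r,n}+T)\}$. $(\Phi,\{H_k\})$ is a two-timescale asymptotic simulation of $\mathcal H^1_{\mathrm{TT}}$ if $\Phi=(\phi_s,\phi_f)$ is a bounded complete hybrid sequence, $\{H_k\}$ is two-timescale admissible, and: (1) if $\Phi$ is complete in the $k$-direction, there is a bounded sequence $f_k=(f_{s,k},f_{f,k})$ with $\limsup_k(\Phi(k,\bar\jmath_k),f_k)\subset\mathrm{gph}(F^1_C)$ and, with $\hat f_{r,k+1}:=(\phi_r(k+1,\bar\jmath_k)-\phi_r(k,\bar\jmath_k))/h_{r,k+1}$, for all $T>0$ and $r\in\{s,f\}$, $\lim_{n\to\infty}\sup_{k\in\mathcal I_{r,n,T}}|\sum_{i=n}^{k-1}h_{r,i+1}(\hat f_{r,i+1}-f_{r,i})|=0$; (2) if $\Phi$ is complete in the $j$-direction, $\limsup_j(\Phi(\bar k_j,j),\Phi(\bar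 k_j,j+1))\subset\mathrm{gph}(G_D)$. Reduced system. Given $\Lambda:\mathbb R^{n_s}\rightrightarrows\mathbb R^{n_f}$, define $\Lambda^C_{\mathrm R},\Lambda^D_{\mathrm R}:\mathbb R^{n_s}\rightrightarrows\mathbb R^{n_f}$ by $\mathrm{gph}(\Lambda^C_{\mathrm R}):=\mathrm{gph}(\Lambda)\cap C$ and $\mathrm{gph}(\Lambda^D_{\mathrm R}):=\mathrm{gph}(\Lambda)\cap D$. Set $C^\Lambda_{\mathrm R}:=\mathrm{dom}(\Lambda^C_{\mathrm R})$, $D^\Lambda_{\mathrm R}:=\mathrm{dom}(\Lambda^D_{\mathrm R})$, $F^\Lambda_{\mathrm R}(x_s):=\overline{\mathrm{co}}\{f_s\in\mathbb R^{n_s}:f_s\in F_s(x_s,x_f),\ x_f\in\Lambda^C_{\mathrm R}(x_s)\}$ (closed convex hull), and, with $G_s(x_s,x_f):=\mathrm{proj}_{\mathbb R^{n_s}}G(x_s,x_f)$, $G^\Lambda_{\mathrm R}(x_s):=\{g_s:g_s\in G_s(x_s,x_f),\ x_f\in\Lambda^D_{\mathrm R}(x_s)\}$. The reduced system is the hybrid inclusion $\mathcal H^\Lambda_{\mathrm R}$ on $\mathbb R^{n_s}$ with data $(C^\Lambda_{\mathrm R},F^\Lambda_{\mathrm R},D^\Lambda_{\mathrm R},G^\Lambda_{\mathrm R})$. *)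

From HB Require Import structures.
From mathcomp Require Import all_boot all_order all_algebra.
From mathcomp Require Import all_classical all_reals all_analysis.
Set Implicit Arguments. Unset Strict Implicit. Unset Printing Implicit Defensive.
Import Order.TTheory GRing.Theory Num.Theory.
Import numFieldNormedType.Exports.
Local Open Scope classical_set_scope.
Local Open Scope ring_scope.

Section Hybrid.
Variable R : realType.

Section SetValued.
Variables (U V : normedModType R).

Definition osc (F : U -> set V) : Prop :=
  forall (x : U) (y : V) (xs : nat -> U) (ys : nat -> V),
    xs @ \oo --> x -> ys @ \oo --> y -> (forall i, F (xs i) (ys i)) -> F x y.

Definition locally_bounded (F : U -> set V) : Prop :=
  forall x : U, exists W, nbhs x W /\ bounded_set (\bigcup_(z in W) F z).

Definition restrict (C : set U) (F : U -> set V) : U -> set V :=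
  fun x y => C x /\ F x y.

Definition gph (F : U -> set V) : set (U * V) := [set p | F p.1 p.2].

End SetValued.

Definition convex_in (V : normedModType R) (A : set V) : Prop :=
  @convex_set R V A.

Definition clconv (V : normedModType R) (A : set V) : set V :=
  \bigcap_(B in [set B : set V | A `<=` B /\ closed B /\ convex_in B]) B.

Definition HBC (V : normedModType R) (C : set V) (F : V -> set V)
  (D : set V) (G : V -> set V) : Prop :=
  [/\ closed C /\ closed D,
      osc F /\ locally_bounded F,
      osc G /\ locally_bounded G,
      (forall x, C x -> F x !=set0 /\ convex_in (F x)) &
      (forall x, D x -> G x !=set0)].

Definition compact_hsd (E : set (nat * nat)) : Prop :=
  exists (J : nat) (k : nat -> nat),
    k 0%N = 0%N /\ (forall j, (j < J)%N -> (k j <= k j.+1)%N) /\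
    E = [set p | (p.2 < J)%N /\ (k p.2 <= p.1 <= k p.2.+1)%N].

Definition hsd (E : set (nat * nat)) : Prop :=
  exists Es : nat -> set (nat * nat),
    (forall i, compact_hsd (Es i)) /\ (forall i, Es i `<=` Es i.+1) /\
    E = \bigcup_i Es i.

(* a hybrid sequence is a pair (E, phi) with hsd E, phi defined on E *)
Definition hs_bounded (V : normedModType R) (E : set (nat * nat))
  (phi : nat -> nat -> V) : Prop :=
  bounded_set [set phi p.1 p.2 | p in E].

Definition complete (E : set (nat * nat)) : Prop :=
  forall N, exists p, E p /\ (N <= p.1 + p.2)%N.
Definition complete_k (E : set (nat * nat)) : Prop :=
  forall N, exists k j, E (k, j) /\ (N <= k)%N.
Definition complete_j (E : set (nat * nat)) : Prop :=
  forall N, exists k j, E (k, j) /\ (N <= j)%N.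

(* infimum of a nonempty set of naturals (0 if empty; never used then) *)
Definition nat_inf (P : set nat) : nat :=
  xget 0%N [set n | P n /\ forall m, P m -> (n <= m)%N].

Definition jbar (E : set (nat * nat)) (k : nat) : nat := nat_inf [set j | E (k.+1, j)].
Definition kbar (E : set (nat * nat)) (j : nat) : nat := nat_inf [set k | E (k, j.+1)].

Definition seq_limsup (T : topologicalType) (u : nat -> T) : set T :=
  [set y | forall W, nbhs y W -> forall N, exists n, (N <= n)%N /\ W (u n)].

Definition omega (V : normedModType R) (E : set (nat * nat))
  (phi : nat -> nat -> V) : set V :=
  [set y | exists ks js : nat -> nat,
     (forall i, E (ks i, js i)) /\
     (forall N, exists M, forall i, (M <= i)%N -> (N <= ks i + js i)%N) /\
     (fun i => phi (ks i) (js i)) @ \oo --> y].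

(* a step-size sequence {h_k}_{k>=1} is represented by h : nat -> R; h 0 is unused *)
Definition admissible (h : nat -> R) : Prop :=
  [/\ forall k, 0 < h k.+1, h @ \oo --> 0 &
      (fun n => \sum_(i < n) h i.+1) @ \oo --> +oo].

Definition tau (h : nat -> R) (k : nat) : R := \sum_(i < k) h i.+1.

Definition mt (h : nat -> R) (t : R) : nat :=
  xget 0%N [set k | tau h k <= t /\ forall k', tau h k' <= t -> (k' <= k)%N].

Definition Iset (h : nat -> R) (n : nat) (T : R) : set nat :=
  [set k | (n.+1 <= k)%N /\ (k <= mt h (tau h n + T))%N].

(* hat f_{k+1} := (phi(k+1, jbar_k) - phi(k, jbar_k)) / h_{k+1}; fhat k denotes hat f_{k+1} *)
Definition fhat (V : normedModType R) (E : set (nat * nat))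
  (phi : nat -> nat -> V) (h : nat -> R) (k : nat) : V :=
  (h k.+1)^-1 *: (phi k.+1 (jbar E k) - phi k (jbar E k)).

Definition sum_condition (V : normedModType R) (E : set (nat * nat))
  (phi : nat -> nat -> V) (h : nat -> R) (f : nat -> V) : Prop :=
  forall T : R, 0 < T ->
    forall e : R, 0 < e -> exists N, forall n, (N <= n)%N ->
      forall k, Iset h n T k ->
        `| \sum_(n <= i < k) h i.+1 *: (fhat E phi h i - f i) | <= e.

Definition asym_sim (V : normedModType R) (C : set V) (F : V -> set V)
  (D : set V) (G : V -> set V)
  (E : set (nat * nat)) (phi : nat -> nat -> V) (h : nat -> R) : Prop :=
  [/\ hsd E /\ hs_bounded E phi, complete E, admissible h,
      (complete_k E -> exists f : nat -> V,
          bounded_set (range f) /\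
          seq_limsup (fun k => (phi k (jbar E k), f k)) `<=` gph (restrict C F) /\
          sum_condition E phi h f) &
      (complete_j E ->
          seq_limsup (fun j => (phi (kbar E j) j, phi (kbar E j) j.+1))
            `<=` gph (restrict D G))].

Definition F1 (Vs Vf : normedModType R) (Fs : Vs * Vf -> set Vs)
  (Ff : Vs * Vf -> set Vf) : Vs * Vf -> set (Vs * Vf) :=
  fun x => Fs x `*` Ff x.

Definition tt_admissible (hs hf : nat -> R) : Prop :=
  [/\ admissible hs, admissible hf & (fun k => hs k / hf k) @ \oo --> 0].

Definition tt_asym_sim (Vs Vf : normedModType R) (C : set (Vs * Vf))
  (Fs : Vs * Vf -> set Vs) (Ff : Vs * Vf -> set Vf)
  (D : set (Vs * Vf)) (G : Vs * Vf -> set (Vs * Vf))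
  (E : set (nat * nat)) (Phi : nat -> nat -> Vs * Vf) (hs hf : nat -> R) : Prop :=
  [/\ hsd E /\ hs_bounded E Phi, complete E, tt_admissible hs hf,
      (complete_k E -> exists (fs : nat -> Vs) (ff : nat -> Vf),
          bounded_set (range (fun k => (fs k, ff k))) /\
          seq_limsup (fun k => (Phi k (jbar E k), (fs k, ff k)))
             `<=` gph (restrict C (F1 Fs Ff)) /\
          sum_condition E (fun k j => (Phi k j).1) hs fs /\
          sum_condition E (fun k j => (Phi k j).2) hf ff) &
      (complete_j E ->
          seq_limsup (fun j => (Phi (kbar E j) j, Phi (kbar E j) j.+1))
            `<=` gph (restrict D G))].

Section Reduced.
Variables (Vs Vf : normedModType R).
Variables (C D : set (Vs * Vf)) (Fs : Vs * Vf -> set Vs) (G : Vs * Vf -> set (Vs * Vf)).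
Variable Lam : Vs -> set Vf.

Definition LamC : Vs -> set Vf := fun xs xf => Lam xs xf /\ C (xs, xf).
Definition LamD : Vs -> set Vf := fun xs xf => Lam xs xf /\ D (xs, xf).
Definition CR : set Vs := [set xs | exists xf, LamC xs xf].
Definition DR : set Vs := [set xs | exists xf, LamD xs xf].
Definition FR : Vs -> set Vs := fun xs =>
  clconv [set fs | exists xf, LamC xs xf /\ Fs (xs, xf) fs].
Definition Gs : Vs * Vf -> set Vs := fun x => [set p.1 | p in G x].
Definition GR : Vs -> set Vs := fun xs =>
  [set gs | exists xf, LamD xs xf /\ Gs (xs, xf) gs].
End Reduced.

End Hybrid.

From Pilot Require Import Defs.
From mathcomp Require Import all_boot all_order all_algebra.
From mathcomp Require Import all_classical all_reals all_analysis.
Import Order.TTheory GRing.Theory Num.Theory.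
Import numFieldNormedType.Exports.
Local Open Scope classical_set_scope.
Local Open Scope ring_scope.
Set Implicit Arguments. Unset Strict Implicit.

(* The slow component inherits the summability condition verbatim, so only
   the two limsup conditions need an argument.  Both go the same way: Phi and
   the flow directions f_k are bounded in finite dimension, hence range in
   compact sets, so an accumulation point (x_s, v) of the slow data lifts along
   a subsequence to a limit ((x_s, x_f), (v, w)) of the full data.  That limit
   lies in gph F1_C (resp. gph G_D) by hypothesis, while (x_s, x_f) is in
   omega(Phi), hence in gph Lam; so x_f witnesses x_s in C_R (resp. D_R) and
   v in F_R(x_s) (resp. G_R(x_s)). *)

Lemma nat_infP (P : set nat) : (exists n, P n) ->
  P (nat_inf P) /\ forall m, P m -> (nat_inf P <= m)%N.
Proof.
move=> [n Pn]; have exP : exists n, `[< P n >] by exists n; apply/asboolP.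
apply: (xgetPex 0%N (P := [set n | P n /\ forall m, P m -> (n <= m)%N])).
have [k /asboolP Pk kmin] := ex_minnP exP.
by exists k; split => // m Pm; apply/kmin/asboolP.
Qed.

Lemma compact_hsd_prev_k (E : set (nat * nat)) k j :
  compact_hsd E -> E (k.+1, j) -> E (k, j) \/ (0 < j)%N /\ E (k.+1, j.-1).
Proof.
move=> [J [s [s0 [smono ->]]]] /= [jJ /andP[sjk ksj]].
have [sjk'|ltksj] := leqP (s j) k; first by left; split => //=; exact: ltnW.
have {ltksj sjk} sjE : s j = k.+1 by apply/eqP; rewrite eqn_leq sjk.
case: j sjE jJ ksj => [|j] sjE jJ _; first by rewrite s0 in sjE.
by right; split => //=; rewrite -sjE smono ?(ltnW jJ) //= leqnn.
Qed.

Lemma compact_hsd_prev_j (E : set (nat * nat)) k j :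
  compact_hsd E -> E (k, j.+1) -> E (k, j) \/ (0 < k)%N /\ E (k.-1, j.+1).
Proof.
move=> [J [s [s0 [smono ->]]]] /= [jJ /andP[sjk ksj]].
have [ksj'|ltsjk] := leqP k (s j.+1).
  have kE : k = s j.+1 by apply/eqP; rewrite eqn_leq ksj'.
  by left; split; [exact: ltnW | rewrite kE smono ?leqnn // ltnW].
case: k ltsjk sjk ksj => // k ltsjk _ ksj.
by right; split => //; split => //=; rewrite ltnS in ltsjk; rewrite ltsjk ltnW.
Qed.

Section HybridDomain.
Variable E : set (nat * nat).
Hypothesis hsdE : hsd E.

Lemma hsd_prev_k k j : E (k.+1, j) -> E (k, j) \/ (0 < j)%N /\ E (k.+1, j.-1).
Proof.
case: hsdE => Es [cEs [_ ->]] [i _ Ei].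
case: (compact_hsd_prev_k (cEs i) Ei) => [?|[? ?]].
  by left; exists i.
by right; split => //; exists i.
Qed.

Lemma hsd_prev_j k j : E (k, j.+1) -> E (k, j) \/ (0 < k)%N /\ E (k.-1, j.+1).
Proof.
case: hsdE => Es [cEs [_ ->]] [i _ Ei].
case: (compact_hsd_prev_j (cEs i) Ei) => [?|[? ?]].
  by left; exists i.
by right; split => //; exists i.
Qed.

Lemma hsd_lower_k k k' j : (k <= k')%N -> E (k', j) -> exists j', E (k, j').
Proof.
move=> /subnK <-; elim: (k' - k)%N j => [|d IHd] j; first by exists j.
rewrite addSn; elim: j => [|j IHj] Ej.
  by case: (hsd_prev_k Ej) => [/IHd//|[]].
by case: (hsd_prev_k Ej) => [/IHd//|[_ /IHj]].
Qed.

Lemma hsd_lower_j k j j' : (j <= j')%N -> E (k, j') -> exists k', E (k', j).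
Proof.
move=> /subnK <-; elim: (j' - j)%N k => [|d IHd] k; first by exists k.
rewrite addSn; elim: k => [|k IHk] Ek.
  by case: (hsd_prev_j Ek) => [/IHd//|[]].
by case: (hsd_prev_j Ek) => [/IHd//|[_ /IHk]].
Qed.

Lemma hsd_jbar k : complete_k E -> E (k.+1, jbar E k) /\ E (k, jbar E k).
Proof.
move=> ck; have [k' [j [Ek'j lekk']]] := ck k.+1.
have [Ejbar jbar_min] := nat_infP (hsd_lower_k lekk' Ek'j).
split => //; case: (hsd_prev_k Ejbar) => // -[jbar_gt0 /jbar_min].
by rewrite -ltnS prednK // ltnn.
Qed.

Lemma hsd_kbar j : complete_j E -> E (kbar E j, j.+1) /\ E (kbar E j, j).
Proof.
move=> cj; have [k [j' [Ekj' lejj']]] := cj j.+1.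
have [Ekbar kbar_min] := nat_infP (hsd_lower_j lejj' Ekj').
split => //; case: (hsd_prev_j Ekbar) => // -[kbar_gt0 /kbar_min].
by rewrite -ltnS prednK // ltnn.
Qed.

End HybridDomain.

Section Subsequences.
Variable T : topologicalType.

Lemma cvg_subseq (u : nat -> T) (sg : nat -> nat) (p : T) :
  (forall i, (i <= sg i)%N) -> u @ \oo --> p -> (u \o sg) @ \oo --> p.
Proof.
move=> sg_ge u_p; apply: cvg_comp u_p => P [N _ NP].
by exists N => // i /= Ni; apply/NP/(leq_trans Ni).
Qed.

Lemma seq_limsup_subseq (u : nat -> T) (sg : nat -> nat) (p : T) :
  (forall i, (i <= sg i)%N) -> (u \o sg) @ \oo --> p -> seq_limsup u p.
Proof.
move=> sg_ge usg_p W Wp N; have [M _ MW] := usg_p W Wp.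
exists (sg (maxn M N)); split; last exact/MW/leq_maxl.
exact: leq_trans (leq_maxr M N) (sg_ge _).
Qed.

Lemma compact_seq_limsup (u : nat -> T) (K : set T) :
  compact K -> (forall n, K (u n)) -> exists2 p, K p & seq_limsup u p.
Proof.
move=> cK Ku; have [p [Kp clp]] : K `&` cluster (u @ \oo) !=set0.
  by apply: cK; exists 0%N => // n _; apply: Ku.
exists p => // W Wp N.
have [|x [[n Nn <-] Wun]] := clp [set u n | n in [set n | (N <= n)%N]] W _ Wp.
  by exists N => // n /= Nn; exists n.
by exists n.
Qed.

End Subsequences.

Section MetricSubsequences.
Variable R : realType.

Lemma seq_limsup_cvg_subseq (T : pseudoMetricType R) (u : nat -> T) (y : T) :
  seq_limsup u y ->
  exists2 sg : nat -> nat, forall i, (i <= sg i)%N & (u \o sg) @ \oo --> y.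
Proof.
move=> uy.
have /choice[sg sgP] n : exists m, (n <= m)%N /\ ball y n.+1%:R^-1 (u m).
  by apply/uy/nbhsx_ballx; rewrite invr_gt0.
exists sg => [i|]; first by case: (sgP i).
apply/cvg_ballP => e e0; have [N _ NP] := near_infty_natSinv_lt (PosNum e0).
by exists N => // i /= Ni; case: (sgP i) => _; apply/le_ball/ltW/NP.
Qed.

Lemma compact_limsup_lift (T S : pseudoMetricType R) (u : nat -> T)
    (K : set T) (pi : T -> S) (y : S) :
  hausdorff_space S -> continuous pi -> compact K -> (forall n, K (u n)) ->
  seq_limsup (pi \o u) y ->
  exists p, exists2 sg : nat -> nat,
    forall i, (i <= sg i)%N & (u \o sg) @ \oo --> p /\ pi p = y.
Proof.
move=> hS cpi cK Ku /seq_limsup_cvg_subseq[s1 s1_ge pius1_y].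
have [p _ /seq_limsup_cvg_subseq[s2 s2_ge us12_p]] :=
  compact_seq_limsup (u := u \o s1) cK (fun n => Ku _).
exists p, (s1 \o s2) => [i|]; first exact: leq_trans (s2_ge i) (s1_ge _).
split => //.
have pius12_pip : (pi \o (u \o s1 \o s2)) @ \oo --> pi p.
  exact: cvg_comp us12_p (cpi p).
exact: (@cvg_unique _ hS _ _ _ _ pius12_pip (cvg_subseq s2_ge pius1_y)).
Qed.

End MetricSubsequences.

Section Boundedness.
Variable R : realType.

Lemma bounded_image_fst (T : Type) (U V : normedModType R) (P : set T)
    (f : T -> U * V) :
  bounded_set (f @` P) -> bounded_set ((fun t => (f t).1) @` P).
Proof.
rewrite /bounded_near /= => fP_bnd; apply: filterS fP_bnd => M fPM _ [t Pt <-].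
by apply: le_trans (fPM _ (imageP _ Pt)); rewrite prod_normE le_max lexx.
Qed.

Lemma rV_closed_ball_compact n (M : R) :
  compact (closed_ball_ Num.norm (0 : 'rV[R]_n) M).
Proof.
apply: bounded_closed_compact; last exact: closed_closed_ball_.
exists M; split => [|r Mr x]; first exact: num_real.
by rewrite /closed_ball_ /= sub0r normrN => /le_trans; apply; exact: ltW.
Qed.

Lemma rV_bounded_compact_cover n m (A : set ('rV[R]_n * 'rV[R]_m)) :
  bounded_set A -> exists2 K, compact K & A `<=` K.
Proof.
move=> [M [_ AM]]; pose B k := closed_ball_ Num.norm (0 : 'rV[R]_k) (M + 1).
exists (B n `*` B m).
  by apply: compact_setX; apply: rV_closed_ball_compact.
move=> x Ax; have : `|x| <= M + 1 by apply: AM Ax; rewrite ltrDl.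
rewrite prod_normE ge_max => /andP[x1 x2].
by split; rewrite /B /closed_ball_ /= sub0r normrN.
Qed.

End Boundedness.

Section ReducedSystem.
Variable R : realType.

Lemma subset_clconv (V : normedModType R) (A : set V) : A `<=` clconv A.
Proof. by move=> x Ax B [AB _]; apply: AB. Qed.

Lemma omega_subseq (V : normedModType R) (E : set (nat * nat))
    (phi : nat -> nat -> V) (ks js : nat -> nat) (y : V) :
  (forall i, E (ks i, js i)) -> (forall i, (i <= ks i + js i)%N) ->
  (fun i => phi (ks i) (js i)) @ \oo --> y -> omega E phi y.
Proof.
move=> Eksjs ksjs_ge phi_y; exists ks, js; split => //; split => // N.
by exists N => i Ni; apply: leq_trans Ni (ksjs_ge i).
Qed.

Lemma omega_limsup_lift (Vs Vf Ws Wf : normedModType R) (E : set (nat * nat))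
    (Phi : nat -> nat -> Vs * Vf) (Lam : Vs -> set Vf) (ks js : nat -> nat)
    (w : nat -> Ws * Wf) (K : set ((Vs * Vf) * (Ws * Wf))) (xs : Vs) (z : Ws) :
  omega E Phi `<=` gph Lam ->
  (forall n, E (ks n, js n)) -> (forall n, (n <= ks n + js n)%N) ->
  compact K -> (forall n, K (Phi (ks n) (js n), w n)) ->
  seq_limsup (fun n => ((Phi (ks n) (js n)).1, (w n).1)) (xs, z) ->
  exists xf wf, Lam xs xf /\
    seq_limsup (fun n => (Phi (ks n) (js n), w n)) ((xs, xf), (z, wf)).
Proof.
move=> omL Eksjs ksjs_ge cK Ku lim.
have pi_cont : continuous (fun q : (Vs * Vf) * (Ws * Wf) => (q.1.1, q.2.1)).
  move=> [[a b] [c d]]; apply: cvg_pair.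
    exact: cvg_comp cvg_fst cvg_fst.
  exact: cvg_comp cvg_snd cvg_fst.
have [[[a xf] [c wf]] [sg sg_ge [u_p [<- <-]]]] :=
  compact_limsup_lift (@norm_hausdorff _ _) pi_cont cK Ku lim.
exists xf, wf; split; last exact: seq_limsup_subseq sg_ge u_p.
apply: (omL (a, xf)); apply: (omega_subseq (ks := ks \o sg) (js := js \o sg)).
- by move=> i; apply: Eksjs.
- by move=> i; apply: leq_trans (sg_ge i) (ksjs_ge _).
- exact: cvg_comp u_p cvg_fst.
Qed.

End ReducedSystem.

(* Plain [restrict] would denote MathComp's function patching [f \_ D]. *)
Section ReducedLimits.
Variables (R : realType) (Vs Vf : normedModType R).
Variables (C D : set (Vs * Vf)) (Fs : Vs * Vf -> set Vs).
Variable Ff : Vs * Vf -> set Vf.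
Variables (G : Vs * Vf -> set (Vs * Vf)) (Lam : Vs -> set Vf).
Variables (E : set (nat * nat)) (Phi : nat -> nat -> Vs * Vf).
Variable K : set (Vs * Vf).
Hypotheses (hsdE : hsd E) (omega_Lam : omega E Phi `<=` gph Lam).
Hypotheses (cK : compact K) (Phi_K : [set Phi p.1 p.2 | p in E] `<=` K).

Let Phi_in_K k j : E (k, j) -> K (Phi k j).
Proof. by move=> Ekj; apply: Phi_K; exists (k, j). Qed.

Lemma reduced_flow_limsup (fs : nat -> Vs) (ff : nat -> Vf)
    (Kf : set (Vs * Vf)) :
  complete_k E -> compact Kf -> range (fun k => (fs k, ff k)) `<=` Kf ->
  seq_limsup (fun k => (Phi k (jbar E k), (fs k, ff k)))
    `<=` gph (Defs.restrict C (F1 Fs Ff)) ->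
  seq_limsup (fun k => ((Phi k (jbar E k)).1, fs k))
    `<=` gph (Defs.restrict (CR C Lam) (FR C Fs Lam)).
Proof.
move=> ck cKf f_Kf lim_F [xs z] lim_s.
have E_jbar k : E (k, jbar E k) by case: (hsd_jbar hsdE k ck).
have u_K k : (K `*` Kf) (Phi k (jbar E k), (fs k, ff k)).
  by split; [exact: Phi_in_K | exact: f_Kf].
have [xf [wf [Lxf /lim_F [/= Cx [Fsz _]]]]] :=
  omega_limsup_lift (ks := id) omega_Lam E_jbar (fun k => leq_addr _ _)
    (compact_setX cK cKf) u_K lim_s.
by split; [exists xf | apply: subset_clconv; exists xf].
Qed.

Lemma reduced_jump_limsup :
  complete_j E ->
  seq_limsup (fun j => (Phi (kbar E j) j, Phi (kbar E j) j.+1))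
    `<=` gph (Defs.restrict D G) ->
  seq_limsup (fun j => ((Phi (kbar E j) j).1, (Phi (kbar E j) j.+1).1))
    `<=` gph (Defs.restrict (DR D Lam) (GR D G Lam)).
Proof.
move=> cj lim_G [xs g] lim_s.
have E_kbar j : E (kbar E j, j) by case: (hsd_kbar hsdE j cj).
have u_K j : (K `*` K) (Phi (kbar E j) j, Phi (kbar E j) j.+1).
  by split; apply: Phi_in_K; case: (hsd_kbar hsdE j cj).
have [xf [gf [Lxf /lim_G [/= Dx Gg]]]] :=
  omega_limsup_lift (js := id) omega_Lam E_kbar (fun j => leq_addl _ _)
    (compact_setX cK cK) u_K lim_s.
by split; [exists xf | exists xf; split => //; exists (g, gf)].
Qed.

End ReducedLimits.

Theorem theorem2 (R : realType) (ns nf : nat)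
  (C D : set ('rV[R]_ns * 'rV[R]_nf))
  (Fs : 'rV[R]_ns * 'rV[R]_nf -> set 'rV[R]_ns)
  (Ff : 'rV[R]_ns * 'rV[R]_nf -> set 'rV[R]_nf)
  (G : 'rV[R]_ns * 'rV[R]_nf -> set ('rV[R]_ns * 'rV[R]_nf))
  (E : set (nat * nat)) (Phi : nat -> nat -> 'rV[R]_ns * 'rV[R]_nf)
  (hs hf : nat -> R) (Lam : 'rV[R]_ns -> set 'rV[R]_nf) :
  HBC C (F1 Fs Ff) D G ->
  tt_asym_sim C Fs Ff D G E Phi hs hf ->
  compact (gph Lam) ->
  omega E Phi `<=` gph Lam ->
  asym_sim (CR C Lam) (FR C Fs Lam) (DR D Lam) (GR D G Lam)
    E (fun k j => (Phi k j).1) hs.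
Proof.
move=> _ [[hsdE bndE] cE [adm_s _ _] flow jump] _ omega_Lam.
have [K cK Phi_K] := rV_bounded_compact_cover bndE.
split => //.
- by split => //; exact: bounded_image_fst bndE.
- move=> ck; have [fs [ff [bnd_f [lim_F [sum_s _]]]]] := flow ck.
  have [Kf cKf f_Kf] := rV_bounded_compact_cover bnd_f.
  exists fs; split; first exact: bounded_image_fst bnd_f.
  split => //.
  by apply: (reduced_flow_limsup hsdE omega_Lam cK Phi_K ck cKf f_Kf lim_F).
- by move=> cj; apply: reduced_jump_limsup hsdE omega_Lam cK Phi_K cj (jump cj).
Qed.
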